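(* Let $(\Omega,\Sigma,\mu)$ be a finite measure space and let $X(\mu)$ be a strictly rectangular function space. For every $f\in L^0(\mu)$, the norm of $X(\mu)$ is strictly monotone on $S(f,X(\mu))$ (i.e. $\|g\|\le\|h\|$ whenever $g,h\in S(f,X(\mu))$ and $0\le g\le h$), and $$\||g|-|h|\|\le 4\|g-h\|\quad\text{for all } g,h\in S(f,X(\mu)).$$ If moreover $f\in X(\mu)$, then for all $s\in S(\Sigma)$ and $g\in S(f,X(\mu))$, $$\||sg|\|\le\|s\|_\infty\||g|\|,\qquad \|sg\|\le 4\|s\|_\infty\|g\|.$$
   Context: $L^0(\mu)$ is the space of equivalence classes (modulo $\mu$-a.e. equality) of real $\Sigma$-measurable functions, ordered $\mu$-a.e. A strictly rectangular function space is a vector subspace $X(\mu)\subseteq L^0(\mu)$ with a norm such that $\chi_Ah\in X(\mu)$ and $\|\chi_Ah\|\le\|h\|$ for all $h\in X(\mu)$, $A\in\Sigma$. $S(\Sigma)$ is the space of real $\Sigma$-simple functions, $\|\cdot\|_\infty$ the $L^\infty(\mu)$ norm. For $f\in L^0(\mu)$: $\Sigma_f=\{A\in\Sigma: f\chi_A\in X(\mu)\}$, $S(f,X(\mu))=\operatorname{span}\{f\chi_A:A\in\Sigma_f\}$. *)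

From HB Require Import structures.
From mathcomp Require Import all_boot all_order all_algebra.
From mathcomp Require Import all_classical all_reals all_analysis.
From mathcomp Require Import ess_sup_inf.
Set Implicit Arguments. Unset Strict Implicit. Unset Printing Implicit Defensive.
Import Order.TTheory GRing.Theory Num.Theory.
Import numFieldNormedType.Exports.
Local Open Scope classical_set_scope.
Local Open Scope ring_scope.

(* Elements of L^0(mu) are represented by measurable functions T -> R;
   equality/order are taken mu-a.e. *)

Section defs.
Context (d : measure_display) (T : measurableType d) (R : realType).
Variable mu : {measure set T -> \bar R}.

Definition L0 (g : T -> R) : Prop := measurable_fun setT g.

Definition ae_eq (g h : T -> R) : Prop := {ae mu, forall x, g x = h x}.
Definition ae_le (g h : T -> R) : Prop := {ae mu, forall x, g x <= h x}.

(* X : the set of (representatives of) elements of X(mu); N : its norm,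
   evaluated on representatives. *)
Record strictly_rectangular_space (X : set (T -> R)) (N : (T -> R) -> R)
  : Prop := {
  srs_L0 : forall g, X g -> L0 g;
  srs_ae : forall g h, X g -> L0 h -> ae_eq g h -> X h /\ N h = N g;
  srs_0 : X (fun _ => 0);
  srs_add : forall g h, X g -> X h -> X (fun x => g x + h x);
  srs_scale : forall (c : R) g, X g -> X (fun x => c * g x);
  srs_norm0 : forall g, X g -> (N g = 0 <-> ae_eq g (fun _ => 0));
  srs_triangle : forall g h, X g -> X h -> N (fun x => g x + h x) <= N g + N h;
  srs_homog : forall (c : R) g, X g -> N (fun x => c * g x) = `|c| * N g;
  srs_rect : forall (A : set T) g, measurable A -> X g ->
    X (fun x => \1_A x * g x) /\ N (fun x => \1_A x * g x) <= N g
}.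

Definition Sigma_f (X : set (T -> R)) (f : T -> R) (A : set T) : Prop :=
  measurable A /\ X (fun x => f x * \1_A x).

Definition S_fX (X : set (T -> R)) (f : T -> R) (g : T -> R) : Prop :=
  L0 g /\
  exists (n : nat) (c : 'I_n -> R) (A : 'I_n -> set T),
    (forall i, Sigma_f X f (A i)) /\
    ae_eq g (fun x => \sum_(i < n) c i * (f x * \1_(A i) x)).

Definition simple_fun (s : T -> R) : Prop :=
  exists (n : nat) (c : 'I_n -> R) (A : 'I_n -> set T),
    (forall i, measurable (A i)) /\
    s = (fun x => \sum_(i < n) c i * \1_(A i) x).

Definition Linf_norm (s : T -> R) : R := fine (ess_sup mu (fun x => (`|s x|)%:E)).

End defs.

(* Every g in S(f, X(mu)) agrees a.e. with |f| * (P \o G), where G maps into a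
   finite type with measurable fibres (the atom of the finitely many sets A_i
   involved, together with the sign of f).  Hence the functions in the
   statement all have the form (F \o G) * u with u in X(mu): g = (P/Q \o G) * h
   when 0 <= g <= h, and |g| - |h| = ((|P| - |Q|)/(P - Q) \o G) * (g - h).
   So is s * g for simple s, since s = F \o G a.e. with |F| <= ||s||_oo.
   The key estimate N((F \o G) * u) <= N u for 0 <= F <= 1 follows by
   induction on the number of points of K where F is not 0 or 1: such an F is
   a convex combination of two multipliers with one such point fewer, and a
   {0, 1}-valued multiplier is an indicator, handled by strict
   rectangularity.  Splitting F into positive and negative parts gives
   N((F \o G) * u) <= 2 M N u when |F| <= M, whence the constants 2 <= 4. *)

From Pilot Require Import Defs.
From HB Require Import structures.
From mathcomp Require Import all_boot all_order all_algebra.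
From mathcomp Require Import all_classical all_reals all_analysis.
From mathcomp Require Import ess_sup_inf ring lra.
Set Implicit Arguments. Unset Strict Implicit. Unset Printing Implicit Defensive.
Import Order.TTheory GRing.Theory Num.Theory.
Local Open Scope classical_set_scope.
Local Open Scope ring_scope.

Section measurable_fibers.
Context {d : measure_display} {T : measurableType d} {R : realType}.

Definition measurable_fibers (K : finType) (G : T -> K) :=
  forall k, measurable (G @^-1` [set k]).

Lemma measurable_fibers_preimage (K : finType) (G : T -> K) (B : set K) :
  measurable_fibers G -> measurable (G @^-1` B).
Proof.
move=> mG; have -> : G @^-1` B = \bigcup_(k in B) G @^-1` [set k].
  apply/seteqP; split=> [x Bx | x [k Bk /= Gxk]]; first by exists (G x).
  by rewrite /= Gxk.
by apply: fin_bigcup_measurable => // k _; exact: mG.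
Qed.

Lemma measurable_fibers_comp (K : finType) (G : T -> K) (F : K -> R) :
  measurable_fibers G -> measurable_fun setT (fun x => F (G x)).
Proof.
move=> mG _ B _; rewrite setTI.
exact: (measurable_fibers_preimage (F @^-1` B) mG).
Qed.

Lemma measurable_fibers_pair (K1 K2 : finType) (G1 : T -> K1) (G2 : T -> K2) :
  measurable_fibers G1 -> measurable_fibers G2 ->
  measurable_fibers (fun x => (G1 x, G2 x)).
Proof.
move=> mG1 mG2 [k1 k2].
have -> : (fun x => (G1 x, G2 x)) @^-1` [set (k1, k2)] =
    G1 @^-1` [set k1] `&` G2 @^-1` [set k2].
  by apply/seteqP; split=> x /=; case=> -> ->.
exact: measurableI.
Qed.

Lemma measurable_fibers_ge0 (f : T -> R) :
  measurable_fun setT f -> measurable_fibers (fun x => 0 <= f x).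
Proof.
move=> mf b; rewrite -[_ @^-1` _]setTI.
apply: (mf measurableT [set r | (0 <= r) = b]).
have m_ge0 : measurable [set r : R | 0 <= r].
  rewrite (_ : [set r | 0 <= r] = `[0, +oo[%classic) //.
  by apply/seteqP; split=> r; rewrite /= in_itv /= andbT.
case: b; first by rewrite (_ : [set r | (0 <= r) = true] = [set r | 0 <= r]).
rewrite (_ : [set r | (0 <= r) = false] = ~` [set r | 0 <= r]).
  exact: measurableC.
by apply/seteqP; split=> r /=; [move=> -> | move/negP/negbTE].
Qed.

Definition atom n (A : 'I_n -> set T) (x : T) : {set 'I_n} := [set i | x \in A i].

Lemma measurable_fibers_atom n (A : 'I_n -> set T) :
  (forall i, measurable (A i)) -> measurable_fibers (atom A).
Proof.
move=> mA S.
have -> : atom A @^-1` [set S] =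
    \bigcap_(i in [set: 'I_n]) (if i \in S then A i else ~` A i).
  apply/seteqP; split=> x /=.
    move=> <- i _; rewrite inE.
    by case: ifPn => [/set_mem | ]; rewrite ?notin_setE.
  move=> xS; apply/finset.setP => i; rewrite inE; have := xS i I.
  by case: (i \in S) => /= ?; [exact: mem_set | exact: memNset].
apply: fin_bigcap_measurable => // i _.
by case: (i \in S); [exact: mA | exact: measurableC].
Qed.

Lemma sum_indicator_atom n (c : 'I_n -> R) (A : 'I_n -> set T) x :
  \sum_(i < n) c i * \1_(A i) x = \sum_(i in atom A x) c i.
Proof.
rewrite [RHS]big_mkcond /=; apply: eq_bigr => i _.
by rewrite inE indicE; case: (x \in A i); rewrite ?mulr1 ?mulr0.
Qed.

End measurable_fibers.

Section simple_functions.
Context {d : measure_display} {T : measurableType d} {R : realType}.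
Variable mu : {measure set T -> \bar R}.

Lemma simple_fun_atom (s : T -> R) : simple_fun s ->
  exists (K : finType) (G : T -> K) (F : K -> R),
    measurable_fibers G /\ s = (fun x => F (G x)).
Proof.
case=> n [c [A [mA ->]]].
exists _, (atom A), (fun S : {set 'I_n} => \sum_(i in S) c i).
split; first exact: measurable_fibers_atom.
by apply/funext => x; rewrite sum_indicator_atom.
Qed.

Lemma simple_fun_measurable (s : T -> R) : simple_fun s -> measurable_fun setT s.
Proof.
by case/simple_fun_atom=> K [G [F [mG ->]]]; exact: measurable_fibers_comp.
Qed.

Lemma simple_fun_bounded (s : T -> R) : simple_fun s ->
  exists B, forall x, `|s x| <= B.
Proof.
case/simple_fun_atom=> K [G [F [_ ->]]]; exists (\sum_k `|F k|) => x.
by rewrite (bigD1 (G x)) //= lerDl sumr_ge0.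
Qed.

Lemma ae_le_Linf_norm (s : T -> R) (B : R) : (forall x, `|s x| <= B) ->
  {ae mu, forall x, `|s x| <= Linf_norm mu s}.
Proof.
move=> sB; rewrite /Linf_norm.
have : (ess_sup mu (fun x => (`|s x|)%:E) <= B%:E)%E.
  by apply: ess_sup_ler => x; rewrite lee_fin.
have := ess_sup_ge mu (fun x => (`|s x|)%:E).
have := (ess_sup_eqNyP mu (fun x => (`|s x|)%:E)).1.
case: ess_sup => [r| |] /= Ny sup_ge supB.
- by apply: filterS sup_ge => x; rewrite lee_fin.
- by [].
- by apply: filterS (Ny erefl).
Qed.

Lemma Linf_norm_ge0 (s : T -> R) : simple_fun s -> 0 <= Linf_norm mu s.
Proof.
case/simple_fun_bounded=> B sB; rewrite leNgt; apply/negP => s_lt0.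
have : ess_sup mu (fun x => (`|s x|)%:E) = -oo%E.
  apply/ess_sup_eqNyP; apply: filterS (ae_le_Linf_norm sB) => x sx.
  by exfalso; have := normr_ge0 (s x); lra.
by move: s_lt0; rewrite /Linf_norm => /[swap] ->; rewrite ltxx.
Qed.

Lemma simple_fun_Linf_atom (s : T -> R) : simple_fun s ->
  exists (K : finType) (G : T -> K) (F : K -> R), measurable_fibers G /\
    (forall k, `|F k| <= Linf_norm mu s) /\ {ae mu, forall x, s x = F (G x)}.
Proof.
move=> hs; have [B sB] := simple_fun_bounded hs.
have Linf_ge0 := Linf_norm_ge0 hs.
case/simple_fun_atom: hs => K [G [F [mG sE]]].
exists K, G, (fun k => if `|F k| <= Linf_norm mu s then F k else 0).
split=> //; split; first by move=> k; case: ifP; rewrite ?normr0.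
by apply: filterS (ae_le_Linf_norm sB) => x; rewrite sE => ->.
Qed.

End simple_functions.

Section strictly_rectangular_space.
Context {d : measure_display} {T : measurableType d} {R : realType}.
Context {mu : {measure set T -> \bar R}} {X : set (T -> R)} {N : (T -> R) -> R}.
Hypothesis hX : strictly_rectangular_space mu X N.

Lemma srs_eqX u v : X u -> u =1 v -> X v.
Proof. by move=> Xu /funext <-. Qed.

Lemma srs_sub u v : X u -> X v -> X (fun x => u x - v x).
Proof.
move=> Xu Xv; apply: srs_eqX (srs_add hX Xu (srs_scale hX (-1) Xv)) _ => x.
by rewrite mulN1r.
Qed.

Lemma srs_sum n (F : 'I_n -> T -> R) :
  (forall i, X (F i)) -> X (fun x => \sum_(i < n) F i x).
Proof.
elim: n F => [|n IH] F XF.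
  by apply: srs_eqX (srs_0 hX) _ => x; rewrite big_ord0.
have XF' := IH (fun i => F (widen_ord (leqnSn n) i)) (fun i => XF _).
apply: srs_eqX (srs_add hX XF' (XF ord_max)) _ => x.
by rewrite big_ord_recr.
Qed.

Lemma srs_norm_ge0 u : X u -> 0 <= N u.
Proof.
move=> Xu; have := srs_triangle hX Xu (srs_scale hX (-1) Xu).
rewrite (srs_homog hX) // normrN normr1 mul1r.
rewrite (_ : (fun x => u x + -1 * u x) = (fun x => 0 * u x)).
  by rewrite (srs_homog hX) // normr0 mul0r; lra.
by apply/funext => x; rewrite mulN1r mul0r subrr.
Qed.

Lemma srs_ae_le (u v : T -> R) c : X u -> N u <= c -> L0 v ->
  Defs.ae_eq mu u v -> X v /\ N v <= c.
Proof. by move=> Xu Nu Lv /(srs_ae hX Xu Lv) [Xv ->]. Qed.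

Lemma srs_convex u v t c : X u -> X v -> N u <= c -> N v <= c -> 0 <= t <= 1 ->
  X (fun x => t * u x + (1 - t) * v x) /\
  N (fun x => t * u x + (1 - t) * v x) <= c.
Proof.
move=> Xu Xv Nu Nv /andP[t0 t1].
have Xtu := srs_scale hX t Xu; have Xtv := srs_scale hX (1 - t) Xv.
split; first exact: srs_add hX _ _ _ _.
apply: le_trans (srs_triangle hX Xtu Xtv) _.
rewrite !(srs_homog hX) // ger0_norm // ger0_norm ?subr_ge0 //.
nra.
Qed.

Section finite_multipliers.
Variables (K : finType) (G : T -> K).
Hypothesis mG : measurable_fibers G.

Lemma srs_mul_fin_indicator (F : K -> R) u : X u ->
  (forall k, F k = 0 \/ F k = 1) ->
  X (fun x => F (G x) * u x) /\ N (fun x => F (G x) * u x) <= N u.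
Proof.
move=> Xu F01.
rewrite (_ : (fun x => F (G x) * u x) =
             (fun x => \1_(G @^-1` [set k | F k = 1]) x * u x)).
  by apply: (srs_rect hX) Xu; exact: measurable_fibers_preimage.
apply/funext => x; rewrite indicE.
case: (F01 (G x)) => FGx; last by rewrite FGx mem_set.
by rewrite memNset ?FGx //= FGx => /eqP; rewrite eq_sym oner_eq0.
Qed.

Lemma srs_mul_fin01 (F : K -> R) u : X u -> (forall k, 0 <= F k <= 1) ->
  X (fun x => F (G x) * u x) /\ N (fun x => F (G x) * u x) <= N u.
Proof.
move=> Xu.
suff: forall (s : seq K) (F : K -> R), (forall k, 0 <= F k <= 1) ->
    (forall k, k \notin s -> F k = 0 \/ F k = 1) ->
    X (fun x => F (G x) * u x) /\ N (fun x => F (G x) * u x) <= N u.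
  by move=> /(_ (enum K) F) + F01; apply=> // k; rewrite mem_enum.
elim=> [|k0 s IH] {}F F01 Fs.
  exact: srs_mul_fin_indicator Xu (fun k => Fs k isT).
pose Fk0 (a : R) k := if k == k0 then a else F k.
have Fk0P a : a = 0 \/ a = 1 -> (forall k, 0 <= Fk0 a k <= 1) /\
    (forall k, k \notin s -> Fk0 a k = 0 \/ Fk0 a k = 1).
  move=> a01; split=> k; rewrite /Fk0; case: eqP => [_|/eqP kk0] //.
  - by case: a01 => ->; rewrite ?lexx ?ler01.
  - by move=> ks; apply: Fs; rewrite inE negb_or kk0.
have [F1_01 F1s] := Fk0P 1 (or_intror erefl).
have [F0_01 F0s] := Fk0P 0 (or_introl erefl).
have [X1 N1] := IH _ F1_01 F1s.
have [X0 N0] := IH _ F0_01 F0s.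
rewrite (_ : (fun x => F (G x) * u x) = (fun x =>
    F k0 * (Fk0 1 (G x) * u x) + (1 - F k0) * (Fk0 0 (G x) * u x))).
  exact: srs_convex.
by apply/funext => x; rewrite /Fk0; case: eqP => [->|_]; ring.
Qed.

Lemma srs_mul_fin_ge0 (F : K -> R) u M : 0 <= M -> X u ->
  (forall k, 0 <= F k <= M) ->
  X (fun x => F (G x) * u x) /\ N (fun x => F (G x) * u x) <= M * N u.
Proof.
move=> M0 Xu FM.
have [M_eq0|M_neq0] := eqVneq M 0.
  rewrite (_ : (fun x => F (G x) * u x) = (fun x => 0 * u x)).
    rewrite (srs_homog hX) // normr0 M_eq0 !mul0r.
    by split=> //; exact: srs_scale hX _ _ _.
  by apply/funext => x; have := FM (G x); rewrite M_eq0 => /le_anti <-.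
have M_gt0 : 0 < M by rewrite lt_def M_neq0.
have F01 k : 0 <= F k / M <= 1.
  by have /andP[F0 FMk] := FM k; rewrite divr_ge0 //= ler_pdivrMr // mul1r.
have [X1 N1] := srs_mul_fin01 Xu F01.
rewrite (_ : (fun x => F (G x) * u x) = (fun x => M * (F (G x) / M * u x))).
  rewrite (srs_homog hX) // ger0_norm //; split; first exact: srs_scale hX _ _ _.
  exact: ler_wpM2l.
by apply/funext => x; rewrite mulrA [M * _]mulrC divfK.
Qed.

Lemma srs_mul_fin (F : K -> R) u M : 0 <= M -> X u ->
  (forall k, `|F k| <= M) ->
  X (fun x => F (G x) * u x) /\ N (fun x => F (G x) * u x) <= 2 * M * N u.
Proof.
move=> M0 Xu FM.
pose Fpos k := if 0 <= F k then F k else 0.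
pose Fneg k := if 0 <= F k then 0 else - F k.
have Fpos_M k : 0 <= Fpos k <= M.
  rewrite /Fpos; case: (lerP 0 (F k)) => F0; last by rewrite lexx.
  by rewrite F0 (le_trans (ler_norm _) (FM k)).
have Fneg_M k : 0 <= Fneg k <= M.
  rewrite /Fneg; case: (lerP 0 (F k)) => F0; first by rewrite lexx.
  by have := FM k; rewrite ltr0_norm // => ->; rewrite oppr_ge0 ltW.
have [Xpos Npos] := srs_mul_fin_ge0 M0 Xu Fpos_M.
have [Xneg Nneg] := srs_mul_fin_ge0 M0 Xu Fneg_M.
have Xneg' := srs_scale hX (-1) Xneg.
rewrite (_ : (fun x => F (G x) * u x) = (fun x =>
    Fpos (G x) * u x + -1 * (Fneg (G x) * u x))).
  split; first exact: srs_add hX _ _ _ _.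
  apply: le_trans (srs_triangle hX Xpos Xneg') _.
  rewrite (srs_homog hX) // normrN normr1 mul1r; lra.
by apply/funext => x; rewrite /Fpos /Fneg; case: ifP => _; ring.
Qed.

End finite_multipliers.

Lemma srs_mul_simple_abs (s u : T -> R) : simple_fun s -> X u ->
  N (fun x => `|s x| * u x) <= Linf_norm mu s * N u.
Proof.
move=> hs Xu; have [K [G [F [mG [FM sE]]]]] := simple_fun_Linf_atom mu hs.
have absFM k : 0 <= `|F k| <= Linf_norm mu s by rewrite normr_ge0 FM.
have [XF NF] := srs_mul_fin_ge0 mG (Linf_norm_ge0 mu hs) Xu absFM.
apply: (srs_ae_le XF NF _ _).2.
  apply: measurable_realfun.measurable_funM (srs_L0 hX Xu).
  exact: measurableT_comp (@measurable_realfun.normr_measurable R _)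
    (simple_fun_measurable hs).
by apply: filterS sE => x ->.
Qed.

Lemma srs_mul_simple (s u : T -> R) : simple_fun s -> X u ->
  N (fun x => s x * u x) <= 2 * Linf_norm mu s * N u.
Proof.
move=> hs Xu; have [K [G [F [mG [FM sE]]]]] := simple_fun_Linf_atom mu hs.
have [XF NF] := srs_mul_fin mG (Linf_norm_ge0 mu hs) Xu FM.
apply: (srs_ae_le XF NF _ _).2.
  exact: measurable_realfun.measurable_funM
    (simple_fun_measurable hs) (srs_L0 hX Xu).
by apply: filterS sE => x ->.
Qed.

Variable f : T -> R.

Lemma S_fX_mem g : S_fX mu X f g -> X g.
Proof.
case=> Lg [n [c [A [XA gE]]]].
have XS : X (fun x => \sum_(i < n) c i * (f x * \1_(A i) x)).
  by apply: srs_sum => i; exact: srs_scale hX _ _ (XA i).2.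
by have [] := srs_ae hX XS Lg (filterS (fun x => esym) gE).
Qed.

Lemma S_fX0 : S_fX mu X f (fun=> 0).
Proof.
split; first exact: measurable_cst.
exists 0, (fun=> 0), (fun=> set0); split; first by case.
by apply: aeW => x; rewrite big_ord0.
Qed.

Hypothesis Lf : L0 f.

(* Recording the sign of f in G allows f to be replaced by |f|. *)
Lemma S_fX_atom g : S_fX mu X f g ->
  exists (K : finType) (G : T -> K) (P : K -> R),
    measurable_fibers G /\ {ae mu, forall x, g x = `|f x| * P (G x)}.
Proof.
case=> _ [n [c [A [XA gE]]]].
exists _, (fun x => (atom A x, 0 <= f x)),
  (fun k : {set 'I_n} * bool => (if k.2 then 1 else -1) * \sum_(i in k.1) c i).
split.
  apply: measurable_fibers_pair; last exact: measurable_fibers_ge0.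
  by apply: measurable_fibers_atom => i; case: (XA i).
apply: filterS gE => x -> /=.
rewrite (_ : \sum_(i < n) _ = f x * \sum_(i < n) c i * \1_(A i) x).
  rewrite sum_indicator_atom; case: lerP => f0.
  - by rewrite ger0_norm // mul1r.
  - by rewrite ltr0_norm //; ring.
by rewrite mulr_sumr; apply: eq_bigr => i _; ring.
Qed.

Lemma S_fX_atom2 g h : S_fX mu X f g -> S_fX mu X f h ->
  exists (K : finType) (G : T -> K) (P Q : K -> R), measurable_fibers G /\
    {ae mu, forall x, g x = `|f x| * P (G x) /\ h x = `|f x| * Q (G x)}.
Proof.
move=> /S_fX_atom [K1 [G1 [P [mG1 gE]]]] /S_fX_atom [K2 [G2 [Q [mG2 hE]]]].
exists _, (fun x => (G1 x, G2 x)), (fun k => P k.1), (fun k => Q k.2).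
split; first exact: measurable_fibers_pair.
exact: filterI gE hE.
Qed.

Lemma S_fX_norm_monotone g h : S_fX mu X f g -> S_fX mu X f h ->
  ae_le mu (fun=> 0) g -> ae_le mu g h -> N g <= N h.
Proof.
move=> Sg Sh g_ge0 g_le_h.
have [K [G [P [Q [mG ghE]]]]] := S_fX_atom2 Sg Sh.
pose F k := if 0 <= P k / Q k <= 1 then P k / Q k else 0.
have F01 k : 0 <= F k <= 1 by rewrite /F; case: ifP; rewrite ?lexx ?ler01.
have [XF NF] := srs_mul_fin01 mG (S_fX_mem Sh) F01.
apply: (srs_ae_le XF NF Sg.1 _).2.
apply: filterS (filterI ghE (filterI g_ge0 g_le_h)) => x [[gE hE]].
rewrite /F /= gE hE; set a := `|f x|; set p := P _; set q := Q _.
move=> -[ap_ge0 ap_le_aq].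
have [q0|q_neq0] := eqVneq q 0.
  rewrite q0 mulr0 in ap_le_aq; rewrite q0 !mulr0.
  by apply/le_anti; rewrite ap_ge0 ap_le_aq.
have [a0|a_neq0] := eqVneq a 0; first by rewrite a0 !mul0r mulr0.
have aq_gt0 : 0 < a * q by rewrite lt_def mulf_neq0 // (le_trans ap_ge0).
have pq : p / q = (a * p) / (a * q) by field; rewrite q_neq0 a_neq0.
rewrite pq ifT; last by rewrite divr_ge0 ?(ltW aq_gt0) //= ler_pdivrMr // mul1r.
by rewrite divfK ?gt_eqF.
Qed.

Lemma S_fX_abs_sub g h : S_fX mu X f g -> S_fX mu X f h ->
  X (fun x => `|g x| - `|h x|) /\
  N (fun x => `|g x| - `|h x|) <= 2 * N (fun x => g x - h x).
Proof.
move=> Sg Sh; have [K [G [P [Q [mG ghE]]]]] := S_fX_atom2 Sg Sh.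
(* At P k = Q k the junk value F k = 0 / 0 = 0 is still the right multiplier. *)
pose F k := (`|P k| - `|Q k|) / (P k - Q k).
have F1 k : `|F k| <= 1.
  rewrite /F normrM normfV; have [->|PQ] := eqVneq (P k) (Q k).
    by rewrite !subrr normr0 mul0r ler01.
  by rewrite ler_pdivrMr ?normr_gt0 ?subr_eq0 // mul1r ler_dist_dist.
have Xgh := srs_sub (S_fX_mem Sg) (S_fX_mem Sh).
have [XF NF] := srs_mul_fin mG ler01 Xgh F1.
rewrite mulr1 in NF; apply: srs_ae_le XF NF _ _.
  apply: measurable_realfun.measurable_funB;
    apply: measurableT_comp (@measurable_realfun.normr_measurable R _) _.
  - exact: Sg.1.
  - exact: Sh.1.
apply: filterS ghE => x [-> ->]; rewrite !normrM normr_id /F.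
have [->|PQ] := eqVneq (P (G x)) (Q (G x)); first by rewrite !subrr mulr0.
by field; rewrite subr_eq0.
Qed.

Lemma S_fX_abs g : S_fX mu X f g -> X (fun x => `|g x|).
Proof.
move=> Sg; have [+ _] := S_fX_abs_sub Sg S_fX0.
by move/srs_eqX; apply=> x; rewrite normr0 subr0.
Qed.

End strictly_rectangular_space.

Theorem proposition3p4 (d : measure_display) (T : measurableType d)
  (R : realType) (mu : {measure set T -> \bar R})
  (X : set (T -> R)) (N : (T -> R) -> R) :
  (mu setT < +oo)%E ->
  strictly_rectangular_space mu X N ->
  forall f : T -> R, L0 f ->
    (forall g h, S_fX mu X f g -> S_fX mu X f h ->
       ae_le mu (fun _ => 0) g -> ae_le mu g h -> N g <= N h) /\
    (forall g h, S_fX mu X f g -> S_fX mu X f h ->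
       N (fun x => `|g x| - `|h x|) <= 4 * N (fun x => g x - h x)) /\
    (X f ->
     forall s g, simple_fun s -> S_fX mu X f g ->
       N (fun x => `|s x * g x|) <= Linf_norm mu s * N (fun x => `|g x|) /\
       N (fun x => s x * g x) <= 4 * Linf_norm mu s * N g).
Proof.
move=> _ hX f Lf; split; [|split].
- by move=> g h; exact: S_fX_norm_monotone.
- move=> g h Sg Sh; have [_ abs_sub_le] := S_fX_abs_sub hX Lf Sg Sh.
  have := srs_norm_ge0 hX (srs_sub hX (S_fX_mem hX Sg) (S_fX_mem hX Sh)); lra.
- move=> _ s g hs Sg; split.
  + under eq_fun do rewrite normrM.
    exact: (srs_mul_simple_abs hX hs (S_fX_abs hX Lf Sg)).
  + have Xg := S_fX_mem hX Sg.
    have := srs_mul_simple hX hs Xg.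
    have := mulr_ge0 (Linf_norm_ge0 mu hs) (srs_norm_ge0 hX Xg); nra.
Qed.
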